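(* Let $M\ge2$, $\mu_1,\dots,\mu_M>0$ and $p_1,\dots,p_{M-1}\in[0,1)$, and let $v_m=\prod_{i=1}^{m-1}p_i/\mu_m$ for $1\le m\le M$ (empty product $=1$), with $\sum_{m=1}^Mv_m=1$. For $2\le m\le M$ let $a_m=\frac{\mu_m}{p_1\mu_1+\mu_m}$ and $b_m=(1-a_m)\bigl(1+\sum_{r=m+1}^M\frac{v_r}{v_1}\bigr)-\frac{a_mv_m}{v_1}$, and let $\xi=\sum_{m=2}^Mb_m\prod_{j=m+1}^Ma_j$ (empty product $=1$, empty sum $=0$). Then $$1-\xi=\mu_1\prod_{m=2}^Ma_m.$$ *)

(* Indices are 1-based natural numbers; mu, p : nat -> R. *)
From mathcomp Require Import all_boot all_order all_algebra.
Set Implicit Arguments. Unset Strict Implicit. Unset Printing Implicit Defensive.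
Import Order.TTheory GRing.Theory Num.Theory.
Local Open Scope ring_scope.

Definition vv (R : realFieldType) (mu p : nat -> R) (m : nat) : R :=
  (\prod_(1 <= i < m) p i) / mu m.

Definition aa (R : realFieldType) (mu p : nat -> R) (m : nat) : R :=
  mu m / (p 1%N * mu 1%N + mu m).

Definition bb (R : realFieldType) (M : nat) (mu p : nat -> R) (m : nat) : R :=
  (1 - aa mu p m) * (1 + \sum_(m.+1 <= r < M.+1) vv mu p r / vv mu p 1%N)
  - aa mu p m * vv mu p m / vv mu p 1%N.

Definition xi (R : realFieldType) (M : nat) (mu p : nat -> R) : R :=
  \sum_(2 <= m < M.+1) bb M mu p m * \prod_(m.+1 <= j < M.+1) aa mu p j.

(* Writing [y m := 1 + \sum_(m <= r <= M) v_r / v_1], one has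
   [b_m = y_(m+1) - a_m y_m], so [xi] is a discrete variation-of-constants
   sum that telescopes to [y_(M+1) - y_2 \prod_(m=2..M) a_m].  Since
   [y_(M+1) = 1] and, because the [v_m] sum to one, [y_2 = 1 / v_1 = mu_1],
   the identity follows. *)
From mathcomp Require Import all_boot all_order all_algebra.
From mathcomp Require Import ring.
Import Order.TTheory GRing.Theory Num.Theory.
Local Open Scope ring_scope.

Lemma telescope_sum_prod (R : comPzRingType) (a y : nat -> R) (m n : nat) :
  (m <= n)%N ->
  \sum_(m <= k < n) (y k.+1 - a k * y k) * \prod_(k.+1 <= j < n) a j
  = y n - y m * \prod_(m <= j < n) a j.
Proof.
move=> le_mn.
have prod_ltn k : (k < n)%N ->
    \prod_(k <= j < n) a j = a k * \prod_(k.+1 <= j < n) a j.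
  by move=> lt_kn; rewrite big_ltn.
rewrite (eq_big_nat _ _ (F2 := fun k =>
    y k.+1 * \prod_(k.+1 <= j < n) a j - y k * \prod_(k <= j < n) a j)).
  by rewrite telescope_sumr // big_geq // mulr1.
by move=> k /andP[_ lt_kn]; rewrite (prod_ltn k) // mulrBl mulrA (mulrC (a k)).
Qed.

Section TailRatio.

Variables (R : realFieldType) (M : nat) (mu p : nat -> R).

Definition tail_ratio (m : nat) : R :=
  1 + \sum_(m <= r < M.+1) vv mu p r / vv mu p 1%N.

Lemma bbE (m : nat) : (m < M.+1)%N ->
  bb M mu p m = tail_ratio m.+1 - aa mu p m * tail_ratio m.
Proof. by move=> lt_mM; rewrite /bb /tail_ratio (big_ltn lt_mM); ring. Qed.

Lemma tail_ratio_end : tail_ratio M.+1 = 1.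
Proof. by rewrite /tail_ratio big_geq // addr0. Qed.

Lemma vv1 : vv mu p 1%N = (mu 1%N)^-1.
Proof. by rewrite /vv big_geq // div1r. Qed.

Lemma tail_ratio2 : (1 <= M)%N -> mu 1%N != 0 ->
  \sum_(1 <= m < M.+1) vv mu p m = 1 -> tail_ratio 2 = mu 1%N.
Proof.
move=> M_gt0 mu1_neq0; rewrite big_ltn // vv1 => sum_vv.
have sum_tail : \sum_(2 <= r < M.+1) vv mu p r = 1 - (mu 1%N)^-1.
  by rewrite -sum_vv; ring.
rewrite /tail_ratio -big_distrl /= sum_tail vv1 invrK mulrBl mulVf //; ring.
Qed.

Lemma xiE : (1 <= M)%N ->
  xi M mu p = 1 - tail_ratio 2 * \prod_(2 <= m < M.+1) aa mu p m.
Proof.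
move=> M_gt0; rewrite -{1}tail_ratio_end -(telescope_sum_prod _ (aa mu p)) // /xi.
by apply: eq_big_nat => m /andP[_ lt_mM]; rewrite bbE.
Qed.

End TailRatio.

Theorem lemma9 (R : realFieldType) (M : nat) (mu p : nat -> R)
  (hM : (2 <= M)%N)
  (hmu : forall m : nat, (1 <= m <= M)%N -> 0 < mu m)
  (hp : forall i : nat, (1 <= i <= M.-1)%N -> 0 <= p i /\ p i < 1)
  (hv : \sum_(1 <= m < M.+1) vv mu p m = 1) :
  1 - xi M mu p = mu 1%N * \prod_(2 <= m < M.+1) aa mu p m.
Proof.
have M_gt0 : (1 <= M)%N by apply: leq_trans hM.
have mu1_neq0 : mu 1%N != 0 by rewrite gt_eqF // hmu // M_gt0.
by rewrite xiE // tail_ratio2 // opprB addrC subrK.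
Qed.
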